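(* For all integers $k\ge2$, $$[t^{2k-3}]\frac{(1-t^2)^{k-2}(1+t)^2}{1+t+t^2}=2(-\sqrt3)^{k-3}\sin\!\Bigl(\frac{(k-4)\pi}{6}\Bigr).$$
   Context: $[t^m]F(t)$ denotes the coefficient of $t^m$ in the formal power series $F(t)$. *)

From mathcomp Require Import all_boot all_order all_algebra.
From mathcomp Require Import reals trigo.
Set Implicit Arguments. Unset Strict Implicit. Unset Printing Implicit Defensive.
Import Order.TTheory GRing.Theory Num.Theory.
Local Open Scope ring_scope.

(* Formal power series coefficients of P(t)/Q(t) for polynomials P, Q with
   Q(0) invertible. *)

Fixpoint inv_series_seq (R : fieldType) (q : {poly R}) (n : nat) : seq R :=
  match n with
  | 0 => [:: (q`_0)^-1]
  | n'.+1 =>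
      let s := inv_series_seq q n' in
      rcons s (- (q`_0)^-1 * \sum_(1 <= i < n'.+2) q`_i * nth 0 s (n'.+1 - i))
  end.

Definition inv_series_coef (R : fieldType) (q : {poly R}) (n : nat) : R :=
  nth 0 (inv_series_seq q n) n.

Definition ratser_coef (R : fieldType) (p q : {poly R}) (m : nat) : R :=
  \sum_(i < m.+1) p`_i * inv_series_coef q (m - i).

From mathcomp Require Import all_boot all_order all_algebra.
From mathcomp Require Import reals trigo lra zify ring.
Import Order.TTheory GRing.Theory Num.Theory.
Local Open Scope ring_scope.

(* Since 1/(1 + t + t^2) = (1 - t)/(1 - t^3), its coefficients are 3-periodic:
   1, -1, 0, 1, -1, 0, ...  Write u_j = (1 - t^2)^j (1 + t)^2, of degree 2j + 2,
   and let x_j, y_j be the coefficients of t^(2j+1), t^(2j+2) in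
   u_j/(1 + t + t^2).
   Multiplying by 1 - t^2 gives x_(j+1) = -2 x_j - y_j and y_(j+1) = x_j - y_j,
   so x_(j+2) = -3 x_(j+1) - 3 x_j.  The roots of t^2 + 3t + 3 are
   -sqrt 3 e^(+-i pi/6), so the closed form satisfies the same recurrence, and
   it remains to compare the first two values. *)

Section PiSixth.

Variable R : realType.

Lemma pisixth_gt0 : 0 < pi / 6 :> R.
Proof. by rewrite divr_gt0 ?pi_gt0. Qed.

Lemma sin_pisixth : sin (pi / 6) = 1 / 2 :> R.
Proof.
set t := pi / 6.
have sin_gt0 : 0 < sin t.
  apply: sin_gt0_pihalf; apply/andP; split; first exact: pisixth_gt0.
  by rewrite /t; have := @pi_gt0 R; lra.
have sin3t : sin (t + t + t) = 1 by rewrite -sin_pihalf /t; congr sin; field.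
rewrite !sinD !cosD in sin3t.
(* with c^2 = 1 - s^2, sin 3t = 1 becomes (2s - 1)^2 (s + 1) = 0 *)
have : (2 * sin t - 1) ^+ 2 * (sin t + 1) = 0.
  have := cos2sin2 t; move: sin3t; set c := cos t; set s := sin t => sin3t c2.
  have e : (s * c + c * s) * c = 2 * s * (1 - s ^+ 2) by rewrite -c2; ring.
  rewrite !expr2 in e *; lra.
by move/eqP; rewrite mulf_eq0 expf_eq0 /= => /orP[|] /eqP; lra.
Qed.

Lemma cos_pisixth : cos (pi / 6) = Num.sqrt 3 / 2 :> R.
Proof.
have cos_gt0 : 0 < cos (pi / 6 : R).
  apply: cos_gt0_pihalf; have := @pi_gt0 R; have := pisixth_gt0.
  by move=> *; apply/andP; split; lra.
have cos_sqr : (2 * cos (pi / 6 : R)) ^+ 2 = 3.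
  by rewrite exprMn cos2sin2 sin_pisixth; lra.
have -> : Num.sqrt 3 = 2 * cos (pi / 6 : R).
  by rewrite -cos_sqr sqrtr_sqr ger0_norm //; lra.
by field.
Qed.

Definition sine_term (k : nat) : R :=
  2 * (- Num.sqrt (3 : R)) ^ (k%:Z - 3) * sin ((k%:R - 4) * pi / 6).

Lemma sine_term_rec k : sine_term k.+2 = -3 * sine_term k.+1 - 3 * sine_term k.
Proof.
rewrite /sine_term.
have sqrt3_gt0 : 0 < Num.sqrt (3 : R) by rewrite sqrtr_gt0 ltr0n.
have sqrt3_sqr : Num.sqrt (3 : R) * Num.sqrt 3 = 3.
  by rewrite -expr2 sqr_sqrtr // ler0n.
set r := Num.sqrt (3 : R) in sqrt3_gt0 sqrt3_sqr *.
have r_unit : (- r) \is a GRing.unit by rewrite unitfE oppr_eq0 gt_eqF.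
set e := k%:Z - 3.
have -> : k.+2%:Z - 3 = e + 1 + 1 by rewrite /e; lia.
have -> : k.+1%:Z - 3 = e + 1 by rewrite /e; lia.
rewrite (exprzDr r_unit (e + 1) 1) (exprzDr r_unit e 1) !expr1z.
set z := (- r) ^ e; set a := (k%:R - 4) * pi / 6.
have -> : (k.+2%:R - 4) * pi / 6 = a + pi / 6 + pi / 6 :> R.
  by rewrite /a -!natr1; field.
have -> : (k.+1%:R - 4) * pi / 6 = a + pi / 6 :> R by rewrite /a -natr1; field.
rewrite !sinD !cosD sin_pisixth cos_pisixth -/r; apply/subr0_eq.
rewrite (_ : _ - _ = (r * r - 3) * (z * (sin a * (r * r - 4) / 2 + cos a * r))).
  by rewrite sqrt3_sqr subrr mul0r.
by field.
Qed.

Lemma sine_term2 : sine_term 2 = 1.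
Proof.
have sqrt3_neq0 : Num.sqrt (3 : R) != 0 by rewrite gt_eqF // sqrtr_gt0 ltr0n.
rewrite /sine_term (_ : 2%:Z - 3 = - 1) //.
have -> : (2%:R - 4) * pi / 6 = - (pi / 6 + pi / 6) :> R by field.
rewrite sinN sinD sin_pisixth cos_pisixth -[_ ^ (-1)]/(_ ^-1) invrN.
by field.
Qed.

Lemma sine_term3 : sine_term 3 = -1.
Proof.
rewrite /sine_term subrr expr0z.
have -> : (3%:R - 4) * pi / 6 = - (pi / 6) :> R by field.
by rewrite sinN sin_pisixth; lra.
Qed.

End PiSixth.

Section QuotientByTrinomial.

Variable R : realType.

Definition trinomial : {poly R} := 1 + 'X + 'X^2.

Definition cyc3 (n : nat) : R :=
  if (n %% 3 == 0)%N then 1 else if (n %% 3 == 1)%N then -1 else 0.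

Lemma cyc3_add3 n : cyc3 (n + 3) = cyc3 n.
Proof. by rewrite /cyc3 modnDr. Qed.

Lemma cyc3_sum3 m : cyc3 m + cyc3 m.+1 + cyc3 m.+2 = 0.
Proof.
elim: m => [|m IH]; first by rewrite /cyc3 /=; lra.
by rewrite -(addn3 m) cyc3_add3; lra.
Qed.

Lemma coef_trinomial i : trinomial`_i = if (i < 3)%N then 1 else 0.
Proof.
rewrite /trinomial !coefD coef1 coefX coefXn.
by case: i => [|[|[|i]]] /=; lra.
Qed.

Lemma inv_series_seq_trinomial n : inv_series_seq trinomial n = mkseq cyc3 n.+1.
Proof.
elim: n => [|n IH]; first by rewrite /= coef_trinomial /= invr1.
rewrite /= IH [in RHS]mkseqS; congr rcons.
rewrite coef_trinomial /= invr1 mulN1r.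
case: n IH => [|n] _; first by rewrite big_nat1 coef_trinomial /cyc3 /=; lra.
rewrite big_ltn // big_ltn // big1_seq ?addr0; last first.
  move=> i /andP[_]; rewrite mem_index_iota => /andP[i_ge3 _].
  by rewrite coef_trinomial ltnNge i_ge3 mul0r.
rewrite !nth_mkseq ?subn1 ?subn2 // !coef_trinomial /= !mul1r.
by have := cyc3_sum3 n; lra.
Qed.

Lemma inv_series_coef_trinomial n : inv_series_coef trinomial n = cyc3 n.
Proof. by rewrite /inv_series_coef inv_series_seq_trinomial nth_mkseq. Qed.

Definition coef_div_trinomial (n : nat) (p : {poly R}) : R :=
  \sum_(i < n.+1) p`_i * cyc3 (n - i).

Lemma ratser_coef_trinomial p m :
  ratser_coef p trinomial m = coef_div_trinomial m p.
Proof.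
by apply: eq_bigr => i _; rewrite /= inv_series_coef_trinomial.
Qed.

Lemma coef_div_trinomialB n p r :
  coef_div_trinomial n (p - r) = coef_div_trinomial n p - coef_div_trinomial n r.
Proof.
by rewrite /coef_div_trinomial -sumrB; apply: eq_bigr => i _; rewrite coefB mulrBl.
Qed.

Lemma coef_div_trinomial_X2M n p :
  coef_div_trinomial n.+2 ('X^2 * p) = coef_div_trinomial n p.
Proof.
rewrite /coef_div_trinomial; do 2 rewrite big_ord_recl.
rewrite !coefXnM /= !mul0r !add0r.
by apply: eq_bigr => i _; rewrite coefXnM /bump /= !add1n !subSS subn0.
Qed.

Lemma coef_div_trinomial_add3 n p :
  coef_div_trinomial n.+3 p = coef_div_trinomial n p - p`_n.+2 + p`_n.+3.
Proof.
rewrite /coef_div_trinomial; do 3 rewrite [in LHS]big_ord_recr /=.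
rewrite (eq_bigr (fun i : 'I_n.+1 => p`_i * cyc3 (n - i))); last first.
  move=> i _ /=; have := ltn_ord i => lt_i_n.
  by rewrite (_ : n.+3 - i = n - i + 3)%N ?cyc3_add3 //; lia.
rewrite (_ : n.+3 - n.+1 = 2)%N; last lia.
rewrite (_ : n.+3 - n.+2 = 1)%N; last lia.
by rewrite subnn /cyc3 /=; lra.
Qed.

Lemma coef_div_trinomial_sum3 n p :
  coef_div_trinomial n p + coef_div_trinomial n.+1 p + coef_div_trinomial n.+2 p
  = p`_n.+2.
Proof.
rewrite /coef_div_trinomial [in X in _ + X + _]big_ord_recr /=.
do 2 rewrite [in X in _ + X]big_ord_recr /=.
rewrite (_ : n.+2 - n.+1 = 1)%N; last lia.
rewrite !subnn.
set A := \sum_(i < n.+1) _; set B := \sum_(i < n.+1) _; set C := \sum_(i < n.+1) _.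
have : A + B + C = 0.
  rewrite /A /B /C -!big_split /=; apply: big1 => i _.
  have := ltn_ord i => lt_i_n.
  rewrite (_ : n.+1 - i = (n - i).+1)%N; last lia.
  rewrite (_ : n.+2 - i = (n - i).+2)%N; last lia.
  by rewrite -!mulrDr cyc3_sum3 mulr0.
by rewrite /cyc3 /=; lra.
Qed.

Definition numer (j : nat) : {poly R} := (1 - 'X^2) ^+ j * (1 + 'X) ^+ 2.

Lemma numerS j : numer j.+1 = numer j - 'X^2 * numer j.
Proof. by rewrite /numer exprS -mulrA mulrBl mul1r. Qed.

Lemma coef_numer_gt j i : (2 * j + 3 <= i)%N -> (numer j)`_i = 0.
Proof.
elim: j i => [|j IH] i le_i.
  rewrite /numer expr0 mul1r nth_default //.
  by apply: leq_trans (size_poly_exp_leq _ _) _; rewrite addrC size_XaddC.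
rewrite numerS coefB coefXnM; case: ltnP => le_2_i; first lia.
by rewrite !IH ?subrr //; lia.
Qed.

Definition odd_coef (j : nat) : R := coef_div_trinomial (2 * j + 1) (numer j).
Definition even_coef (j : nat) : R := coef_div_trinomial (2 * j + 2) (numer j).

Lemma odd_coefS j : odd_coef j.+1 = - 2 * odd_coef j - even_coef j.
Proof.
rewrite /odd_coef /even_coef numerS.
rewrite (_ : 2 * j.+1 + 1 = (2 * j + 1).+2)%N; last lia.
rewrite coef_div_trinomialB coef_div_trinomial_X2M.
have := coef_div_trinomial_sum3 (2 * j + 1) (numer j).
rewrite coef_numer_gt; last lia.
by rewrite (_ : 2 * j + 2 = (2 * j + 1).+1)%N; [lra | lia].
Qed.

Lemma even_coefS j : even_coef j.+1 = odd_coef j - even_coef j.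
Proof.
rewrite /odd_coef /even_coef numerS.
rewrite (_ : 2 * j.+1 + 2 = (2 * j + 2).+2)%N; last lia.
rewrite coef_div_trinomialB coef_div_trinomial_X2M.
rewrite (_ : (2 * j + 2).+2 = (2 * j + 1).+3)%N; last lia.
by rewrite coef_div_trinomial_add3 !coef_numer_gt; [lra | lia | lia].
Qed.

Lemma odd_coef_rec j : odd_coef j.+2 = - 3 * odd_coef j.+1 - 3 * odd_coef j.
Proof. by rewrite odd_coefS even_coefS odd_coefS; lra. Qed.

Lemma odd_coef0 : odd_coef 0 = 1.
Proof.
rewrite /odd_coef /numer /coef_div_trinomial expr0 mul1r sqrrD expr1n.
by rewrite !big_ord_recr big_ord0 /= mul1r !coefE /cyc3 /=; lra.
Qed.

Lemma odd_coef1 : odd_coef 1 = -1.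
Proof.
rewrite odd_coefS odd_coef0 /even_coef /numer /coef_div_trinomial.
rewrite expr0 mul1r sqrrD expr1n.
by rewrite !big_ord_recr big_ord0 /= mul1r !coefE /cyc3 /=; lra.
Qed.

Lemma odd_coef_sine_term j : odd_coef j = sine_term R j.+2.
Proof.
suff : odd_coef j = sine_term R j.+2 /\ odd_coef j.+1 = sine_term R j.+3 by case.
elim: j => [|j [IH1 IH2]].
  by rewrite odd_coef0 odd_coef1 sine_term2 sine_term3.
by split => //; rewrite odd_coef_rec sine_term_rec IH1 IH2.
Qed.

End QuotientByTrinomial.

Theorem lemma7 (R : realType) (k : nat) (hk : (2 <= k)%N) :
  ratser_coef ((1 - 'X^2) ^+ (k - 2) * (1 + 'X) ^+ 2 : {poly R})
              (1 + 'X + 'X^2) (2 * k - 3)%N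
  = 2 * (- Num.sqrt (3 : R)) ^ (k%:Z - 3) * sin ((k%:R - 4) * pi / 6).
Proof.
rewrite -[1 + 'X + 'X^2]/(trinomial R) ratser_coef_trinomial.
have := odd_coef_sine_term R (k - 2); rewrite /odd_coef /numer /sine_term.
rewrite (_ : (k - 2).+2 = k)%N; last lia.
by rewrite (_ : 2 * (k - 2) + 1 = 2 * k - 3)%N; [exact | lia].
Qed.
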